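(* Let $\alpha\ge 2$, let $\gamma_t,\gamma_r>0$, and let $a,b>0$. Let $\beta_t,\beta_r,D_t,D_r>0$, and suppose there exist real numbers $\nu>0$, $\mu_1,\mu_2\ge 0$ and $\lambda$ satisfying the stationarity conditions $$(2^{\gamma_t}-1)\,\mu_1\,\frac{a\,D_t^{\alpha}}{\beta_t^{2}}=\lambda,\qquad (2^{\gamma_r}-1)\,\mu_2\,\frac{b\,D_r^{\alpha}}{\beta_r^{2}}=\lambda,\qquad \mu_1=\nu,\qquad \mu_2=(2^{\gamma_t}-1)\mu_1+\nu .$$ Define $|h_t|^2=\dfrac{\beta_t}{a\,D_t^{\alpha}}$ and $|h_r|^2=\dfrac{\beta_r}{b\,D_r^{\alpha}}$. Then $$|h_t|^2\le |h_r|^2 \iff \beta_r\le \frac{2^{\gamma_t}\,(2^{\gamma_r}-1)}{2^{\gamma_t}-1}\,\beta_t .$$ Symmetrically (roles of $t$ and $r$ exchanged): if instead $(2^{\gamma_r}-1)\mu_1 bD_r^{\alpha}/\beta_r^2=\lambda$, $(2^{\gamma_t}-1)\mu_2 aD_t^{\alpha}/\beta_t^2=\lambda$, $\mu_1=\nu>0$, $\mu_2=(2^{\gamma_r}-1)\mu_1+\nu$, then $|h_t|^2\ge |h_r|^2\iff \beta_t\le \dfrac{2^{\gamma_r}(2^{\gamma_t}-1)}{2^{\gamma_r}-1}\beta_r$.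
   Context: Setting: an access point (AP) serves a transmitted user $t$ and a reflected user $r$ via a simultaneously transmitting and reflecting reconfigurable intelligent surface (STAR-RIS) using NOMA. For user $k\in\{t,r\}$, $\beta_k\in(0,1]$ is the energy-splitting (amplitude-squared) coefficient with $\beta_t+\beta_r=1$, $D_k$ is the distance from the STAR-RIS to user $k$, $\alpha=\alpha_{RU}$ the path-loss exponent, $\gamma_k$ the rate requirement, $p_k$ the transmit power, and $a=\sigma^2/(\rho_0 c_t)$, $b=\sigma^2/(\rho_0 c_r)$ with $\sigma^2,\rho_0,c_t,c_r>0$ constants, so that the effective channel power gains are $\rho_0\beta_kc_k/D_k^\alpha$ (proportional to the quantities $|h_k|^2$ above). The stated stationarity conditions are those of the Lagrangian $\nu(p_t+p_r-P_{\max})+\lambda(\beta_t+\beta_r-1)+\mu_1[(2^{\gamma_t}-1)(aD_t^\alpha/\beta_t+p_r)-p_t]+\mu_2[(2^{\gamma_r}-1)bD_r^\alpha/\beta_r-p_r]$ with respect to $\beta_t,\beta_r,p_t,p_r$, arising from the NOMA QoS constraints when user $r$ performs successive interference cancellation (decoding order $\lambda(r)=1$); the symmetric case corresponds to decoding order $\lambda(t)=1$. The lemma says that, at such stationary points, the SIC decoding-order constraint is equivalent to a linear constraint in $(\beta_t,\beta_r)$. *)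

From Stdlib Require Export Reals.
Open Scope R_scope.

(* Effective channel power gains (up to the common factor rho0/sigma^2):
   |h_t|^2 = beta_t / (a D_t^alpha),  |h_r|^2 = beta_r / (b D_r^alpha). *)
Definition hgain (beta c D alpha : R) : R := beta / (c * Rpower D alpha).

From Stdlib Require Import Reals Lra.
Open Scope R_scope.

(* Write K = 2^gt - 1, L = 2^gr - 1 (both positive since the rates
   are positive), A = a Dt^alpha and B = b Dr^alpha, so that |h_t|^2 = bt / A and
   |h_r|^2 = br / B.  Eliminating lambda, mu1 = nu and mu2 = (K + 1) nu from the
   stationarity conditions and cancelling nu > 0 leaves the balance equation
       A K br^2 = L (K + 1) B bt^2.                                      (balance)
   Substituting it into bt / A <= br / B and clearing the positive factors turns
   the gain comparison into the linear inequality K br <= L (K + 1) bt, i.e.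
   br <= 2^gt (2^gr - 1) / (2^gt - 1) bt.  The other
   decoding order is the same statement with the roles of t and r exchanged. *)

Lemma Rmult_le_iff_l (c x y : R) : 0 < c -> (c * x <= c * y <-> x <= y).
Proof.
  intro Hc; split; intro H.
  - exact (Rmult_le_reg_l c x y Hc H).
  - apply Rmult_le_compat_l; lra.
Qed.

Lemma rate_threshold_pos (g : R) : 0 < g -> 0 < Rpower 2 g - 1.
Proof.
  intro Hg.
  assert (H : Rpower 2 0 < Rpower 2 g) by (apply Rpower_lt; lra).
  rewrite Rpower_O in H; lra.
Qed.

Lemma pathloss_pos (c D alpha : R) : 0 < c -> 0 < c * Rpower D alpha.
Proof.
  intro Hc; apply Rmult_lt_0_compat; [exact Hc | unfold Rpower; apply exp_pos].
Qed.

Lemma stationarity_balance (K L A B bt br nu : R) :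
  0 < nu -> 0 < bt -> 0 < br ->
  K * nu * (A / bt ^ 2) = L * (K * nu + nu) * (B / br ^ 2) ->
  A * K * br ^ 2 = L * (K + 1) * B * bt ^ 2.
Proof.
  intros Hnu Ht Hr E.
  apply (Rmult_eq_reg_l (nu / (bt ^ 2 * br ^ 2))).
  - replace (nu / (bt ^ 2 * br ^ 2) * (A * K * br ^ 2))
      with (K * nu * (A / bt ^ 2)) by (field; lra).
    rewrite E; field; lra.
  - apply Rgt_not_eq, Rdiv_lt_0_compat; [exact Hnu|].
    apply Rmult_lt_0_compat; apply pow_lt; assumption.
Qed.

Lemma gain_order_iff_linear (K L A B bt br : R) :
  0 < K -> 0 < A -> 0 < B -> 0 < bt -> 0 < br ->
  A * K * br ^ 2 = L * (K + 1) * B * bt ^ 2 ->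
  (bt / A <= br / B <-> br <= (K + 1) * L / K * bt).
Proof.
  intros HK HA HB Ht Hr E.
  rewrite <- (Rmult_le_iff_l (A * B * K * br)) by (repeat apply Rmult_lt_0_compat; lra).
  replace (A * B * K * br * (bt / A)) with ((bt * B) * (K * br)) by (field; lra).
  replace (A * B * K * br * (br / B)) with (A * K * br ^ 2) by (field; lra).
  rewrite E.
  replace (L * (K + 1) * B * bt ^ 2) with ((bt * B) * (L * (K + 1) * bt)) by ring.
  rewrite Rmult_le_iff_l by (apply Rmult_lt_0_compat; lra).
  rewrite <- (Rmult_le_iff_l K br) by exact HK.
  replace (K * ((K + 1) * L / K * bt)) with (L * (K + 1) * bt) by (field; lra).
  reflexivity.
Qed.

Lemma sic_order_linear (alpha gt gr a b bt br Dt Dr : R) :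
  0 < gt -> 0 < a -> 0 < b -> 0 < bt -> 0 < br ->
  (exists nu mu1 mu2 lam : R,
      0 < nu /\ 0 <= mu1 /\ 0 <= mu2 /\
      (Rpower 2 gt - 1) * mu1 * (a * Rpower Dt alpha / bt ^ 2) = lam /\
      (Rpower 2 gr - 1) * mu2 * (b * Rpower Dr alpha / br ^ 2) = lam /\
      mu1 = nu /\
      mu2 = (Rpower 2 gt - 1) * mu1 + nu) ->
  (hgain bt a Dt alpha <= hgain br b Dr alpha <->
   br <= Rpower 2 gt * (Rpower 2 gr - 1) / (Rpower 2 gt - 1) * bt).
Proof.
  intros Hgt Ha Hb Ht Hr (nu & mu1 & mu2 & lam & Hnu & _ & _ & Et & Er & -> & ->).
  replace (Rpower 2 gt) with ((Rpower 2 gt - 1) + 1) at 1 by ring.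
  unfold hgain.
  apply gain_order_iff_linear;
    auto using rate_threshold_pos, pathloss_pos.
  apply (stationarity_balance _ _ _ _ _ _ nu); lra.
Qed.

Theorem lemma1 (alpha gt gr a b bt br Dt Dr : R) :
  2 <= alpha -> 0 < gt -> 0 < gr -> 0 < a -> 0 < b ->
  0 < bt -> 0 < br -> 0 < Dt -> 0 < Dr ->
  ((exists nu mu1 mu2 lam : R,
      0 < nu /\ 0 <= mu1 /\ 0 <= mu2 /\
      (Rpower 2 gt - 1) * mu1 * (a * Rpower Dt alpha / bt ^ 2) = lam /\
      (Rpower 2 gr - 1) * mu2 * (b * Rpower Dr alpha / br ^ 2) = lam /\
      mu1 = nu /\
      mu2 = (Rpower 2 gt - 1) * mu1 + nu) ->
   (hgain bt a Dt alpha <= hgain br b Dr alpha <->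
    br <= Rpower 2 gt * (Rpower 2 gr - 1) / (Rpower 2 gt - 1) * bt))
  /\
  ((exists nu mu1 mu2 lam : R,
      0 < nu /\ 0 <= mu1 /\ 0 <= mu2 /\
      (Rpower 2 gr - 1) * mu1 * (b * Rpower Dr alpha / br ^ 2) = lam /\
      (Rpower 2 gt - 1) * mu2 * (a * Rpower Dt alpha / bt ^ 2) = lam /\
      mu1 = nu /\
      mu2 = (Rpower 2 gr - 1) * mu1 + nu) ->
   (hgain bt a Dt alpha >= hgain br b Dr alpha <->
    bt <= Rpower 2 gr * (Rpower 2 gt - 1) / (Rpower 2 gr - 1) * br)).
Proof.
  intros _ Hgt Hgr Ha Hb Ht Hr _ _.
  split.
  - apply sic_order_linear; assumption.
  -
    intro Hkkt.
    assert (Hge : forall x y : R, x >= y <-> y <= x) by (intros; split; lra).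
    rewrite Hge.
    apply sic_order_linear; assumption.
Qed.
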